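(* Let $0<q\leq 1$, $1\leq r\leq\infty$, $\varepsilon\geq 0$, $A\in\mathbb{R}^{m\times n}$, $D\in\mathbb{R}^{n\times d}$, $y\in\mathbb{R}^m$, and let $s$ be a positive integer. Let $\hat{f}$ be a solution of $$\min_{\tilde{f}\in\mathbb{R}^n}\|D^*\tilde{f}\|_q\quad\text{subject to}\quad\|A\tilde{f}-y\|_r\leq\varepsilon,$$ let $f\in\mathbb{R}^n$ satisfy $\|Af-y\|_r\leq\varepsilon$, and let $h=\hat{f}-f$. Let $\Omega$ be the index set of the $s$ largest entries of $D^*f$ in magnitude, and $T$ the index set of the $s$ largest entries of $D^*h$ in magnitude. Then $$\|Ah\|_q^q\leq m^{1-q/r}(2\varepsilon)^q$$ and $$\|D^*_{T^c}h\|_q^q\leq\|D^*_{T}h\|_q^q+2\|D^*_{\Omega^c}f\|_q^q.$$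
   Context: For $S\subset[d]$, $D_S^*x$ denotes the vector $D^*x$ restricted to the indices in $S$ (other entries zero), and $S^c=[d]\setminus S$. $\|u\|_q^q=\sum_j|u_j|^q$; $\|u\|_\infty=\max_j|u_j|$. *)

From HB Require Import structures.
From mathcomp Require Import all_boot all_order all_algebra.
From mathcomp Require Import reals ereal exp.
Set Implicit Arguments. Unset Strict Implicit. Unset Printing Implicit Defensive.
Import Order.TTheory GRing.Theory Num.Theory.
Local Open Scope ring_scope.

Definition lpnorm (R : realType) (k : nat) (p : \bar R) (u : 'cV[R]_k) : R :=
  match p with
  | EFin p' => (\sum_(j < k) `|u j 0| `^ p') `^ (p'^-1)
  | _ => \big[Num.max/0]_(j < k) `|u j 0|
  end.

Definition restr (R : realType) (k : nat) (S : {set 'I_k}) (x : 'cV[R]_k)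
  : 'cV[R]_k := \col_(j < k) (if j \in S then x j 0 else 0).

Definition largest_idx (R : realType) (k : nat) (s : nat) (x : 'cV[R]_k)
  (S : {set 'I_k}) : Prop :=
  #|S| = minn s k /\
  (forall i j, i \in S -> j \notin S -> `|x j 0| <= `|x i 0|).

(* the exponent 1 - q/r, with q/oo = 0 *)
Definition exp_1_qr (R : realType) (q : R) (r : \bar R) : R :=
  match r with EFin r' => 1 - q / r' | _ => 1 end.

From HB Require Import structures.
From mathcomp Require Import all_boot all_order all_algebra.
From mathcomp Require Import reals ereal exp.
From mathcomp Require Import convex hoelder lra.
Set Implicit Arguments.
Unset Strict Implicit.
Unset Printing Implicit Defensive.
Import Order.TTheory GRing.Theory Num.Theory.
Local Open Scope ring_scope.

(* Write x = D^T f and h = D^T (fhat - f).  For the first bound,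
   A h = (A fhat - y) - (A f - y) has r-norm at most 2 eps by midpoint convexity
   of t ^ r, and the power-mean inequality (weighted AM-GM) bounds
   sum_j |v_j|^q by m^(1 - q/r) ||v||_r^q.  For the second, minimality of fhat
   gives sum_j |x_j + h_j|^q <= sum_j |x_j|^q; splitting both sums over Omega and
   its complement and using |a + b|^q <= |a|^q + |b|^q yields the cone inequality
   with Omega in place of T.  Since |Omega| = |T| and T collects the largest
   entries of h, the mass of h on Omega is at most its mass on T. *)

Section powR_inequalities.
Context {R : realType}.

Lemma subadditive_powR (q a b : R) : 0 < q -> q <= 1 -> 0 <= a -> 0 <= b ->
  (a + b) `^ q <= a `^ q + b `^ q.
Proof.
move=> q0 q1 a0 b0; have [s0|s0] := eqVneq (a + b) 0.
  by rewrite s0 powR0 ?gt_eqF // addr_ge0 ?powR_ge0.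
have sp : 0 < a + b by rewrite lt0r s0 addr_ge0.
have scale (t : R) : 0 <= t -> t `^ q = (a + b) `^ q * (t / (a + b)) `^ q.
  by move=> t0; rewrite -powRM ?divr_ge0 ?(ltW sp) // mulrCA mulfV ?mulr1.
have le_powR (t : R) : 0 <= t <= 1 -> t <= t `^ q.
  case/andP; rewrite le_eqVlt => /predU1P[<- _|t0 t1]; first exact: powR_ge0.
  by apply: ger1_powR => //; rewrite t0.
rewrite (scale a a0) (scale b b0) -mulrDr ler_peMr ?powR_ge0 //.
rewrite -[leLHS](divff s0) mulrDl lerD ?le_powR //.
  by rewrite divr_ge0 ?(ltW sp) //= ler_pdivrMr // mul1r lerDl.
by rewrite divr_ge0 ?(ltW sp) //= ler_pdivrMr // mul1r lerDr.
Qed.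

Lemma powR_AMGM (p x c : R) : 0 < p -> p <= 1 -> 0 <= x -> 0 <= c ->
  x `^ p * c `^ (1 - p) <= p * x + (1 - p) * c.
Proof.
move=> p0 p1 x0 c0; have [->|pn1] := eqVneq p 1.
  by rewrite subrr powRr0 mulr1 powRr1 // mul1r mul0r addr0.
have q0 : 0 < 1 - p by rewrite subr_gt0 lt_neqAle pn1.
have ip : 0 < p^-1 by rewrite invr_gt0.
have iq : 0 < (1 - p)^-1 by rewrite invr_gt0.
have := conjugate_powR (powR_ge0 x p) (powR_ge0 c (1 - p)) ip iq.
rewrite !invrK addrC subrK => /(_ erefl).
by rewrite -!powRrM !mulfV ?gt_eqF // !powRr1 // (mulrC x) (mulrC c).
Qed.

Lemma sum_powR_le_card (I : finType) (p : R) (b : I -> R) :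
  0 < p -> p <= 1 -> (forall j, 0 <= b j) ->
  \sum_j b j `^ p <= #|I|%:R `^ (1 - p) * (\sum_j b j) `^ p.
Proof.
move=> p0 p1 b0; set N : R := #|I|%:R; set B := \sum_j b j.
have [B0|Bn0] := eqVneq B 0.
  rewrite big1 ?mulr_ge0 ?powR_ge0 // => j _.
  by rewrite (psumr_eq0P (fun i _ => b0 i) B0) // powR0 ?gt_eqF.
have Bp : 0 < B by rewrite lt0r Bn0 sumr_ge0.
have Np : 0 < N.
  rewrite ltr0n lt0n; apply: contra Bn0 => /eqP I0.
  by rewrite /B big_pred0 // => j; apply: card0_eq I0 j.
set c := B / N; have cp : 0 < c by rewrite divr_gt0.
(* weighted AM-GM against the mean [c] of the [b j] *)
have mean : c `^ (1 - p) * \sum_j b j `^ p <= B.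
  rewrite mulr_sumr (@le_trans _ _ (\sum_j (p * b j + (1 - p) * c))) //.
    by apply: ler_sum => j _; rewrite mulrC; exact: powR_AMGM p0 p1 (b0 j) (ltW cp).
  rewrite big_split /= -mulr_sumr sumr_const -mulr_natr -/B -/N.
  by rewrite -mulrA divfK ?gt_eqF // -mulrDl subrKC mul1r.
rewrite -(ler_pM2l (powR_gt0 (1 - p) cp)) (le_trans mean) //.
rewrite mulrA -powRM ?(ltW cp) ?(ltW Np) // divfK ?gt_eqF // -powRD ?Bn0 ?implybT //.
by rewrite subrK powRr1 // ltW.
Qed.

Lemma midpoint_convex_powR (r x y : R) : 1 <= r -> 0 <= x -> 0 <= y ->
  ((x + y) / 2) `^ r <= (x `^ r + y `^ r) / 2.
Proof.
move=> r1 x0 y0.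
have h0 : 0 <= 2^-1 :> R by rewrite invr_ge0.
have h1 : 2^-1 <= 1 :> R by rewrite invf_le1 // ler1n.
have := @convex_powR R r r1 (Itv01 h0 h1) x y.
rewrite !classical_sets.in_setE /= !in_itv /= !andbT => /(_ x0 y0).
have half : 1 - 2^-1 = 2^-1 :> R by rewrite {1}(splitr 1) mul1r addrK.
rewrite [X in X `^ _]convRE convRE /= /unstable.onem half -!mulrDr.
by rewrite ![2^-1 * _]mulrC.
Qed.

Lemma powR_normB_le (q a b : R) : 0 < q -> q <= 1 ->
  `|a - b| `^ q <= `|a| `^ q + `|b| `^ q.
Proof.
move=> q0 q1; apply: le_trans (subadditive_powR q0 q1 (normr_ge0 a) (normr_ge0 b)).
by apply: ge0_ler_powR (ltW q0) _ _ _ _ (ler_normB a b); rewrite nnegrE ?addr_ge0.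
Qed.

End powR_inequalities.

Section sums_over_index_sets.
Context {R : realType} {I : finType}.
Implicit Types (S T : {set I}).

Lemma sumr_setC S (F : I -> R) :
  \sum_i F i = \sum_(i in S) F i + \sum_(i in ~: S) F i.
Proof.
by rewrite (bigID (mem S)) /=; congr (_ + _); apply: eq_bigl => i; rewrite inE.
Qed.

Lemma sum_le_sum_largest S T (w : I -> R) : (forall i, 0 <= w i) ->
  #|S| = #|T| -> (forall i j, i \in T -> j \notin T -> w j <= w i) ->
  \sum_(i in S) w i <= \sum_(i in T) w i.
Proof.
move=> w0 cardST wT.
rewrite (big_setID T) [leRHS](big_setID S) /= setIC lerD2l.
have cardD : #|S :\: T| = #|T :\: S|.
  by apply/eqP; rewrite -(eqn_add2l #|S :&: T|) cardsID setIC cardsID cardST.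
(* [c] separates the entries outside [T] from those inside *)
set c := \big[Num.max/0]_(i in S :\: T) w i.
apply: (@le_trans _ _ (\sum_(i in S :\: T) c)).
  by apply: ler_sum => i iST; apply: le_bigmax_cond.
rewrite sumr_const cardD -sumr_const; apply: ler_sum => i.
rewrite inE => /andP[iS iT]; apply: bigmax_le => [|j]; first exact: w0.
by rewrite inE => /andP[jT _]; apply: wT.
Qed.

Variables (q : R) (x h : I -> R).
Hypotheses (q0 : 0 < q) (q1 : q <= 1).
Hypothesis x_plus_h_le : \sum_i `|x i + h i| `^ q <= \sum_i `|x i| `^ q.

Lemma cone_sum_powR_le S :
  \sum_(i in ~: S) `|h i| `^ q <=
    \sum_(i in S) `|h i| `^ q + 2 * \sum_(i in ~: S) `|x i| `^ q.
Proof.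
have on_S : \sum_(i in S) (`|x i| `^ q - `|h i| `^ q) <=
            \sum_(i in S) `|x i + h i| `^ q.
  apply: ler_sum => i _; rewrite lerBlDr.
  by rewrite -{1}[x i](addrK (h i)) powR_normB_le.
have on_Sc : \sum_(i in ~: S) (`|h i| `^ q - `|x i| `^ q) <=
             \sum_(i in ~: S) `|x i + h i| `^ q.
  apply: ler_sum => i _; rewrite lerBlDr.
  by rewrite -{1}[h i](addKr (x i)) addrC powR_normB_le.
rewrite !sumrB in on_S on_Sc.
have := x_plus_h_le; rewrite (sumr_setC S) [leRHS](sumr_setC S).
lra.
Qed.

Lemma cone_sum_powR_le_largest S T : #|S| = #|T| ->
  (forall i j, i \in T -> j \notin T -> `|h j| <= `|h i|) ->
  \sum_(i in ~: T) `|h i| `^ q <=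
    \sum_(i in T) `|h i| `^ q + 2 * \sum_(i in ~: S) `|x i| `^ q.
Proof.
move=> cardST hT.
have cone := cone_sum_powR_le S.
have S_le_T : \sum_(i in S) `|h i| `^ q <= \sum_(i in T) `|h i| `^ q.
  apply: sum_le_sum_largest cardST _ => [i|i j iT jT]; first exact: powR_ge0.
  by apply: ge0_ler_powR (ltW q0) _ _ _ _ (hT i j iT jT); rewrite nnegrE.
have /= splitS := sumr_setC S (fun i => `|h i| `^ q).
have /= splitT := sumr_setC T (fun i => `|h i| `^ q).
lra.
Qed.

End sums_over_index_sets.

Section lpnorm.
Context {R : realType} {k : nat}.
Implicit Types (u v a b : 'cV[R]_k) (p : R).

Lemma lpnorm_ge0 (p : \bar R) u : 0 <= lpnorm p u.
Proof.
case: p => [p| |] /=; first exact: powR_ge0.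
all: by elim/big_ind: _ => // c d c0 d0; rewrite le_max c0.
Qed.

Lemma lpnorm_powR p u : 0 < p -> lpnorm p%:E u `^ p = \sum_j `|u j 0| `^ p.
Proof.
move=> p0 /=; rewrite -powRrM mulVf ?gt_eqF // powRr1 //.
by apply: sumr_ge0 => j _; apply: powR_ge0.
Qed.

Lemma lpnorm_le_powR p u e : 0 < p -> 0 <= e ->
  (lpnorm p%:E u <= e) = (\sum_j `|u j 0| `^ p <= e `^ p).
Proof.
move=> p0 e0; apply/idP/idP => [le_e|le_pow].
  rewrite -lpnorm_powR //.
  by apply: ge0_ler_powR (ltW p0) _ _ _ _ le_e; rewrite nnegrE ?lpnorm_ge0.
have -> : e = (e `^ p) `^ p^-1 by rewrite -powRrM mulfV ?gt_eqF // powRr1.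
apply: ge0_ler_powR _ _ _ _ _ le_pow; rewrite ?nnegrE ?invr_ge0 ?(ltW p0) //.
  by rewrite sumr_ge0 // => j _; rewrite powR_ge0.
by rewrite powR_ge0.
Qed.

Lemma lpnorm_restr_powR p (S : {set 'I_k}) u : 0 < p ->
  lpnorm p%:E (restr S u) `^ p = \sum_(j in S) `|u j 0| `^ p.
Proof.
move=> p0; rewrite lpnorm_powR // [RHS]big_mkcond; apply: eq_bigr => j _.
by rewrite mxE; case: (j \in S) => //; rewrite normr0 powR0 // gt_eqF.
Qed.

Lemma lpnormB_le_twice (r : \bar R) a b e : (1 <= r)%E ->
  lpnorm r a <= e -> lpnorm r b <= e -> lpnorm r (a - b) <= 2 * e.
Proof.
move=> r1 ae be; have e0 := le_trans (lpnorm_ge0 _ _) ae.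
case: r r1 ae be => [r| |] //; last first.
  move=> _ /= ae be; apply: bigmax_le => [|j _]; first by rewrite mulr_ge0.
  rewrite !mxE mulr2n mulrDl mul1r (le_trans (ler_normB _ _)) // lerD //.
    exact: le_trans (le_bigmax _ (fun j => `|a j 0|) j) ae.
  exact: le_trans (le_bigmax _ (fun j => `|b j 0|) j) be.
rewrite lee_fin => r1; have r0 := lt_le_trans ltr01 r1.
have e2 : 0 <= 2 * e by rewrite mulr_ge0.
move=> ae be; rewrite (lpnorm_le_powR _ r0 e0) in ae.
rewrite (lpnorm_le_powR _ r0 e0) in be.
rewrite (lpnorm_le_powR _ r0 e2).
apply: (@le_trans _ _ (\sum_j 2 `^ r * ((`|a j 0| `^ r + `|b j 0| `^ r) / 2))).
  apply: ler_sum => j _; rewrite !mxE.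
  have mid := midpoint_convex_powR r1 (normr_ge0 (a j 0)) (normr_ge0 (b j 0)).
  apply: le_trans (ler_wpM2l (powR_ge0 2 r) mid).
  rewrite -powRM ?divr_ge0 ?addr_ge0 // mulrCA mulfV ?pnatr_eq0 // mulr1.
  by apply: ge0_ler_powR (ltW r0) _ _ _ _ (ler_normB _ _); rewrite nnegrE ?addr_ge0.
rewrite -mulr_sumr -mulr_suml big_split /= powRM // ler_wpM2l ?powR_ge0 //.
by rewrite ler_pdivrMr // mulr_natr mulr2n lerD.
Qed.

Lemma lpnorm_powR_le_card (q : R) (r : \bar R) v : 0 < q -> (q%:E <= r)%E ->
  lpnorm q%:E v `^ q <= k%:R `^ exp_1_qr q r * lpnorm r v `^ q.
Proof.
move=> q0; rewrite lpnorm_powR //; case: r => [r| |] // qr; last first.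
  have max_ge0 := lpnorm_ge0 +oo%E v.
  rewrite powRr1 ?ler0n //.
  apply: (@le_trans _ _ (\sum_(j < k) lpnorm +oo%E v `^ q)).
    apply: ler_sum => j _.
    by apply: ge0_ler_powR (ltW q0) _ _ _ _ (le_bigmax _ _ j); rewrite nnegrE.
  by rewrite sumr_const card_ord mulr_natl.
rewrite lee_fin in qr; have r0 := lt_le_trans q0 qr.
have p0 : 0 < q / r by rewrite divr_gt0.
have p1 : q / r <= 1 by rewrite ler_pdivrMr // mul1r.
have pow j : `|v j 0| `^ q = (`|v j 0| `^ r) `^ (q / r).
  by rewrite -powRrM mulrCA mulfV ?gt_eqF ?mulr1.
rewrite (eq_bigr _ (fun j _ => pow j)).
apply: le_trans (sum_powR_le_card p0 p1 (fun j => powR_ge0 _ _)) _.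
by rewrite card_ord /= -powRrM (mulrC r^-1).
Qed.

End lpnorm.

Theorem lemma2p9 (R : realType) (m n d : nat) (q : R) (r : \bar R) (eps : R)
  (A : 'M[R]_(m, n)) (D : 'M[R]_(n, d)) (y : 'cV[R]_m) (s : nat)
  (fhat f : 'cV[R]_n) (Omega T : {set 'I_d}) :
  0 < q -> q <= 1 -> (1 <= r)%E -> 0 <= eps -> (0 < s)%N ->
  lpnorm r (A *m fhat - y) <= eps ->
  (forall g : 'cV[R]_n, lpnorm r (A *m g - y) <= eps ->
     lpnorm q%:E (D^T *m fhat) <= lpnorm q%:E (D^T *m g)) ->
  lpnorm r (A *m f - y) <= eps ->
  largest_idx s (D^T *m f) Omega ->
  largest_idx s (D^T *m (fhat - f)) T ->
  (lpnorm q%:E (A *m (fhat - f))) `^ q <= (m%:R) `^ (exp_1_qr q r) * (2 * eps) `^ q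
  /\
  (lpnorm q%:E (restr (~: T) (D^T *m (fhat - f)))) `^ q <=
    (lpnorm q%:E (restr T (D^T *m (fhat - f)))) `^ q
    + 2 * (lpnorm q%:E (restr (~: Omega) (D^T *m f))) `^ q.
Proof.
(* only the size of [Omega] matters, not that it indexes the largest entries of [D^T f] *)
move=> q0 q1 r1 eps0 _ fhat_feas fhat_min f_feas [cardO _] [cardT T_largest].
split.
  have -> : A *m (fhat - f) = (A *m fhat - y) - (A *m f - y).
    by rewrite mulmxBr opprB addrA subrK.
  have qr : (q%:E <= r)%E by apply: le_trans r1; rewrite lee_fin.
  apply: le_trans (lpnorm_powR_le_card _ q0 qr) _.
  rewrite ler_wpM2l ?powR_ge0 //.
  apply: ge0_ler_powR (ltW q0) _ _ _ _ (lpnormB_le_twice r1 fhat_feas f_feas).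
    by rewrite nnegrE lpnorm_ge0.
  by rewrite nnegrE mulr_ge0.
set x := D^T *m f; set h := D^T *m (fhat - f).
have x_plus_h : D^T *m fhat = x + h by rewrite -mulmxDr addrC subrK.
have x_plus_h_le : \sum_j `|x j 0 + h j 0| `^ q <= \sum_j `|x j 0| `^ q.
  have := fhat_min f f_feas.
  rewrite (lpnorm_le_powR _ q0 (lpnorm_ge0 _ _)) lpnorm_powR // x_plus_h.
  by under eq_bigr do rewrite [(x + h) _ _]mxE.
(* the patterns spare rewrite costly failed unifications of restrictions to
   different index sets *)
rewrite [leLHS](lpnorm_restr_powR (~: T) h q0).
rewrite [X in X + _](lpnorm_restr_powR T h q0).
rewrite [X in 2 * X](lpnorm_restr_powR (~: Omega) x q0).
apply: (cone_sum_powR_le_largest q0 q1 x_plus_h_le); first by rewrite cardO cardT.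
exact: T_largest.
Qed.
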